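(* If a circuit $f:a\to b$ is safe, then every polynomial in the tuple $[\![f]\!]$ has all exponents in $\{0,1\}$, i.e. contains no monomial in which some variable appears with exponent at least $2$.
   Context: A circuit is a morphism of the free symmetric strict monoidal category whose objects are natural numbers (tensor = addition) generated by $\mathsf{discard}:1\to 0$, $\mathsf{copy}:1\to 2$, $\mathsf{zero}:0\to1$, $\mathsf{add}:2\to1$, $\mathsf{one}:0\to 1$, $\mathsf{and}:2\to 1$. $[\![\cdot]\!]$ assigns to each circuit $f:a\to b$ a $b$-tuple of polynomials in $\mathbb{Z}_2[x_1,\dots,x_a]$ (genuine polynomials, $x^2\neq x$), compositionally: composition is substitution, tensor is juxtaposition with variables renumbered, symmetries permute variables, and $\mathsf{discard}\mapsto\langle\rangle$, $\mathsf{copy}\mapsto\langle x_1,x_1\rangle$, $\mathsf{zero}\mapsto\langle0\rangle$, $\mathsf{add}\mapsto\langle x_1+x_2\rangle$, $\mathsf{one}\mapsto\langle1\rangle$, $\mathsf{and}\mapsto\langle x_1x_2\rangle$. View a circuit as a directed graph whose nodes are wires and whose edges go from each input wire of a generator occurrence to each of its output wires. A circuit $c$ is safe if for every occurrence of $\mathsf{and}$ in $c$, there is no input port of $c$ from which both input ports of that $\mathsf{and}$ are reachable by a forward path. *)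

From HB Require Import structures.
From mathcomp Require Import all_boot all_algebra.
From mathcomp Require Import mpoly.
From Stdlib Require Import Relations.
Set Implicit Arguments. Unset Strict Implicit. Unset Printing Implicit Defensive.
Import GRing.Theory.
Local Open Scope ring_scope.

(* Circuits: syntactic terms of the free symmetric strict monoidal category
   on objects nat (tensor = +) generated by the six gates.
   Every morphism of the free SMC is denoted by such a term. *)
Inductive circ : nat -> nat -> Type :=
| Discard : circ 1 0
| Copy    : circ 1 2
| Zero    : circ 0 1
| Add     : circ 2 1
| One     : circ 0 1
| And     : circ 2 1
| Idc     : forall n, circ n n
| Sym     : forall m n, circ (m + n) (n + m)
| Comp    : forall a b c, circ a b -> circ b c -> circ a c
| Tens    : forall a b c d, circ a b -> circ c d -> circ (a + c) (b + d).

Definition F2 := 'F_2.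

(* variables x_1..x_a are 'X_0 .. 'X_(a-1) *)
Fixpoint sem a b (f : circ a b) : 'I_b -> {mpoly F2[a]} :=
  match f in circ a b return 'I_b -> {mpoly F2[a]} with
  | Discard => fun _ => 0
  | Copy => fun _ => 'X_(@ord0 0)
  | Zero => fun _ => 0
  | Add => fun _ => 'X_(@ord0 1) + 'X_(@ord_max 1)
  | One => fun _ => 1
  | And => fun _ => 'X_(@ord0 1) * 'X_(@ord_max 1)
  | Idc n => fun i => 'X_i
  | Sym m n => fun k =>
      match split k with
      | inl i => 'X_(rshift m i)
      | inr j => 'X_(lshift n j)
      end
  | Comp a b c f g => fun k => comp_mpoly (mktuple (sem f)) (sem g k)
  | Tens a b c d f g => fun k =>
      match split k with
      | inl i => comp_mpoly (mktuple (fun l : 'I_a => 'X_(lshift c l))) (sem f i)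
      | inr j => comp_mpoly (mktuple (fun l : 'I_c => 'X_(rshift a l))) (sem g j)
      end
  end.

(* ---- The wire graph of a circuit ----
   Wires are numbered by nat.  [build f ins fr] lays out the circuit f whose
   input wires are [ins], using fresh wire names >= fr.  Identities and symmetries create no
   new wires (they only route/permute existing wires), as in the free SMC. *)
Record layout := Layout {
  l_outs : seq nat; l_edges : seq (nat * nat); l_ands : seq (nat * nat);
  l_fresh : nat }.

Definition gate (ins : seq nat) (nout : nat) (fr : nat) : layout :=
  let outs := iota fr nout in
  Layout outs [seq (i, o) | i <- ins, o <- outs] [::] (fr + nout).

Fixpoint build a b (f : circ a b) (ins : seq nat) (fr : nat) : layout :=
  match f with
  | Discard => gate ins 0 fr
  | Copy => gate ins 2 fr
  | Zero => gate ins 1 fr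
  | Add => gate ins 1 fr
  | One => gate ins 1 fr
  | And => let L := gate ins 1 fr in
           Layout (l_outs L) (l_edges L) [:: (nth 0%N ins 0, nth 0%N ins 1)]
                  (l_fresh L)
  | Idc n => Layout ins [::] [::] fr
  | Sym m n => Layout (drop m ins ++ take m ins) [::] [::] fr
  | Comp a b c f g =>
      let L1 := build f ins fr in
      let L2 := build g (l_outs L1) (l_fresh L1) in
      Layout (l_outs L2) (l_edges L1 ++ l_edges L2) (l_ands L1 ++ l_ands L2)
             (l_fresh L2)
  | Tens a b c d f g =>
      let L1 := build f (take a ins) fr in
      let L2 := build g (drop a ins) (l_fresh L1) in
      Layout (l_outs L1 ++ l_outs L2) (l_edges L1 ++ l_edges L2)
             (l_ands L1 ++ l_ands L2) (l_fresh L2)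
  end.

Definition graph a b (f : circ a b) : layout := build f (iota 0 a) a.

Definition reach a b (f : circ a b) : relation nat :=
  clos_refl_trans nat (fun u v => (u, v) \in l_edges (graph f)).

Definition safe a b (f : circ a b) : Prop :=
  forall p q, (p, q) \in l_ands (graph f) ->
  forall i : nat, (i < a)%N -> ~ (reach f i p /\ reach f i q).

Definition multilinear n (p : {mpoly F2[n]}) : Prop :=
  forall m, m \in msupp p -> forall i : 'I_n, (m i <= 1)%N.

From mathcomp Require Import all_boot all_algebra.
From mathcomp Require Import mpoly.
From Stdlib Require Import Relations.
Set Implicit Arguments. Unset Strict Implicit. Unset Printing Implicit Defensive.
Import GRing.Theory.
Local Open Scope ring_scope.

(* For a relation [dep] between input ports and wires (eventually forward
   reachability), the polynomial carried by a wire [w] is multilinear and only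
   mentions variables [i] with [dep i w].  Copies, sums and routing preserve
   this along the edges; at an and-gate, safety says that no input reaches
   both of its input wires, so the two factors have disjoint variables and
   their product is again multilinear.  To pass through sequential
   composition, the invariant is proved for a circuit fed with an arbitrary
   tuple of input polynomials that already satisfy it. *)

Lemma comp_mpolyA (R : comNzRingType) n m k (lp : m.-tuple {mpoly R[k]})
    (F : 'I_n -> {mpoly R[m]}) p :
  comp_mpoly lp (comp_mpoly [tuple F j | j < n] p)
  = comp_mpoly [tuple comp_mpoly lp (F j) | j < n] p.
Proof.
rewrite (comp_mpolyEX p) (comp_mpolyEX p) raddf_sum; apply: eq_bigr => mm _.
rewrite /= comp_mpolyZ !comp_mpolyX rmorph_prod; congr (_ *: _).
by apply: eq_bigr => i _; rewrite rmorphXn !tnth_mktuple.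
Qed.

Lemma comp_mpoly_vars (R : comNzRingType) n m k (lp : m.-tuple {mpoly R[k]})
    (g : 'I_n -> 'I_m) p :
  comp_mpoly lp (comp_mpoly [tuple 'X_(g l) | l < n] p)
  = comp_mpoly [tuple tnth lp (g l) | l < n] p.
Proof.
rewrite comp_mpolyA; congr comp_mpoly; apply: eq_mktuple => l.
by rewrite comp_mpolyXU (tnth_nth 0).
Qed.

Section MultilinearAt.
Variables (R : nzRingType) (N : nat) (dep : nat -> nat -> Prop).
Implicit Types (p q : {mpoly R[N]}) (w : nat).

Definition multilinear_at w p := forall m, m \in msupp p ->
  forall i : 'I_N, (m i <= 1)%N /\ ((0 < m i)%N -> dep i w).

Lemma multilinear_at0 w : multilinear_at w 0.
Proof. by move=> m; rewrite mcoeff_msupp mcoeff0 eqxx. Qed.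

Lemma multilinear_at1 w : multilinear_at w 1.
Proof.
move=> m; rewrite mcoeff_msupp mcoeff1.
by have [-> _ i|] := eqVneq m 0%MM; rewrite ?eqxx // mnm0E.
Qed.

Lemma multilinear_atX (j : 'I_N) w : dep j w -> multilinear_at w 'X_j.
Proof.
move=> dep_j m; rewrite msuppX inE => /eqP -> i; rewrite mnm1E.
by case: (j =P i) => [<-|].
Qed.

Lemma multilinear_at_sub p w w' :
  (forall i, dep i w -> dep i w') -> multilinear_at w p -> multilinear_at w' p.
Proof.
move=> sub_w mp m /mp m_ok i.
by case: (m_ok i) => le1 dep_i; split=> // /dep_i/sub_w.
Qed.

Lemma multilinear_atD p q w :
  multilinear_at w p -> multilinear_at w q -> multilinear_at w (p + q).
Proof. by move=> mp mq m /msuppD_le; rewrite mem_cat => /orP[/mp|/mq]. Qed.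

Lemma multilinear_atM p q u v w :
  multilinear_at u p -> multilinear_at v q ->
  (forall i : 'I_N, ~ (dep i u /\ dep i v)) ->
  (forall i, dep i u -> dep i w) -> (forall i, dep i v -> dep i w) ->
  multilinear_at w (p * q).
Proof.
move=> mp mq disj sub_u sub_v m /msuppM_le/allpairsP[[m1 m2] /= [/mp m1_ok /mq m2_ok ->]] i.
rewrite mnmDE; case: (m1_ok i) (m2_ok i) => le1 dep1 [le2 dep2].
case: (posnP (m1 i)) => [->|pos1]; first by rewrite add0n; split=> // /dep2/sub_v.
case: (posnP (m2 i)) => [->|pos2]; first by rewrite addn0; split=> // /dep1/sub_u.
by case: (disj i); split; [apply: dep1 | apply: dep2].
Qed.

End MultilinearAt.

Lemma nth_rot_drop (T : Type) (x0 : T) m s i :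
  (i < size s - m)%N -> nth x0 (rot m s) i = nth x0 s (m + i).
Proof. by move=> lt_i; rewrite /rot nth_cat size_drop lt_i nth_drop. Qed.

Lemma nth_rot_take (T : Type) (x0 : T) m s j :
  (j < m)%N -> nth x0 (rot m s) (size s - m + j) = nth x0 s j.
Proof. by move=> lt_j; rewrite /rot nth_cat size_drop ltnNge leq_addr /= addKn nth_take. Qed.

Lemma size_take_drop_add (T : Type) (s : seq T) a c :
  size s = (a + c)%N -> size (take a s) = a /\ size (drop a s) = c.
Proof. by move=> size_s; rewrite size_drop size_takel size_s ?addKn ?leq_addr. Qed.

Lemma size_build a b (f : circ a b) ins fr :
  size ins = a -> size (l_outs (build f ins fr)) = b.
Proof.
elim: f ins fr => //=.
- by move=> m n ins fr size_ins; rewrite -/(rot m ins) size_rot size_ins addnC.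
- by move=> a' b' c f IHf g IHg ins fr size_ins; apply/IHg/IHf.
- move=> a' b' c d f IHf g IHg ins fr /size_take_drop_add[size_take size_drop].
  by rewrite size_cat IHf // IHg.
Qed.

Section WireGraph.
Variables (R : nzRingType) (N : nat) (dep : nat -> nat -> Prop).

Definition edges_preserve (E : seq (nat * nat)) :=
  forall i u v, (u, v) \in E -> dep i u -> dep i v.

Definition ands_separated (A : seq (nat * nat)) :=
  forall p q, (p, q) \in A -> forall i : 'I_N, ~ (dep i p /\ dep i q).

Definition wires_carry (ws : seq nat) n (P : n.-tuple {mpoly R[N]}) :=
  forall j : 'I_n, multilinear_at dep (nth 0%N ws j) (tnth P j).

Lemma edges_preserve_cat E1 E2 :
  edges_preserve (E1 ++ E2) -> edges_preserve E1 /\ edges_preserve E2.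
Proof. by move=> pres; split=> i u v uv; apply: pres; rewrite mem_cat uv ?orbT. Qed.

Lemma ands_separated_cat A1 A2 :
  ands_separated (A1 ++ A2) -> ands_separated A1 /\ ands_separated A2.
Proof. by move=> sep; split=> p q pq; apply: sep; rewrite mem_cat pq ?orbT. Qed.

Lemma gate_dep ins outs (j k : nat) i :
  edges_preserve [seq (u, v) | u <- ins, v <- outs] ->
  (j < size ins)%N -> (k < size outs)%N ->
  dep i (nth 0%N ins j) -> dep i (nth 0%N outs k).
Proof.
move=> pres lt_j lt_k; apply: pres; apply/allpairsP.
by exists (nth 0%N ins j, nth 0%N outs k); rewrite /= !mem_nth.
Qed.

Lemma wires_carry_take ws a c (P : (a + c).-tuple {mpoly R[N]}) :
  wires_carry ws P -> wires_carry (take a ws) [tuple tnth P (lshift c l) | l < a].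
Proof. by move=> carry j; rewrite tnth_mktuple nth_take //; apply: carry. Qed.

Lemma wires_carry_drop ws a c (P : (a + c).-tuple {mpoly R[N]}) :
  wires_carry ws P -> wires_carry (drop a ws) [tuple tnth P (rshift a l) | l < c].
Proof. by move=> carry j; rewrite tnth_mktuple nth_drop; apply: carry. Qed.

End WireGraph.

Section CircuitSemantics.
Variables (N : nat) (dep : nat -> nat -> Prop).

Lemma wires_carry_sym m n ins (P : (m + n).-tuple {mpoly F2[N]}) :
  size ins = (m + n)%N -> wires_carry dep ins P ->
  wires_carry dep (rot m ins) [tuple comp_mpoly P (sem (Sym m n) k) | k < n + m].
Proof.
move=> size_ins carry k; rewrite tnth_mktuple /=.
case: (splitP k) => [i|j] ->; rewrite comp_mpolyXU -(tnth_nth 0 P).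
- by rewrite nth_rot_drop ?size_ins ?addKn //; apply: (carry (rshift m i)).
- have := carry (lshift n j).
  by rewrite /= -(nth_rot_take 0%N ins (ltn_ord j)) size_ins addKn.
Qed.

Lemma wires_carry_build a b (f : circ a b) ins fr (P : a.-tuple {mpoly F2[N]}) :
  size ins = a ->
  edges_preserve dep (l_edges (build f ins fr)) ->
  ands_separated N dep (l_ands (build f ins fr)) ->
  wires_carry dep ins P ->
  wires_carry dep (l_outs (build f ins fr)) [tuple comp_mpoly P (sem f k) | k < b].
Proof.
elim: f ins fr P => [||||||n|m n|a' b' c f IHf g IHg|a' b' c d f IHf g IHg]
  ins fr P size_ins pres sep carry k; rewrite tnth_mktuple /=.
- by case: k.
- rewrite comp_mpolyXU -(tnth_nth 0 P); apply: multilinear_at_sub (carry ord0) => i.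
  by apply: gate_dep; rewrite ?size_ins.
- by rewrite comp_mpoly0; apply: multilinear_at0.
- rewrite comp_mpolyD !comp_mpolyXU -!(tnth_nth 0 P).
  apply: multilinear_atD; [apply: multilinear_at_sub (carry ord0)
                          |apply: multilinear_at_sub (carry ord_max)] => i;
    by apply: gate_dep; rewrite ?size_ins.
- by rewrite comp_mpoly1; apply: multilinear_at1.
- rewrite rmorphM /= !comp_mpolyXU -!(tnth_nth 0 P).
  apply: multilinear_atM (carry ord0) (carry ord_max) _ _ _.
  + by apply: sep; rewrite inE.
  + by move=> i; apply: gate_dep; rewrite ?size_ins.
  + by move=> i; apply: gate_dep; rewrite ?size_ins.
- by rewrite comp_mpolyXU -(tnth_nth 0 P); apply: carry.
- by have /(_ k) := wires_carry_sym size_ins carry; rewrite tnth_mktuple.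
- case/edges_preserve_cat: pres => pres_f pres_g.
  case/ands_separated_cat: sep => sep_f sep_g.
  have carry_mid := IHf _ _ _ size_ins pres_f sep_f carry.
  have := IHg _ _ _ (size_build _ _ size_ins) pres_g sep_g carry_mid k.
  by rewrite tnth_mktuple comp_mpolyA.
- case/edges_preserve_cat: pres => pres_f pres_g.
  case/ands_separated_cat: sep => sep_f sep_g.
  have [size_take size_drop] := size_take_drop_add size_ins.
  case: (splitP k) => [i|j] ->; rewrite comp_mpoly_vars nth_cat (size_build _ _ size_take).
  + rewrite ltn_ord.
    have := IHf _ _ _ size_take pres_f sep_f (wires_carry_take carry) i.
    by rewrite tnth_mktuple.
  + rewrite ltnNge leq_addr addKn /=.
    have := IHg _ _ _ size_drop pres_g sep_g (wires_carry_drop carry) j.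
    by rewrite tnth_mktuple.
Qed.

End CircuitSemantics.

Theorem mainTheorem7 (a b : nat) (f : circ a b) :
  safe f -> forall k : 'I_b, multilinear (sem f k).
Proof.
move=> safe_f k m m_supp i.
have pres : edges_preserve (reach f) (l_edges (graph f)).
  by move=> j u v uv reach_u; apply: rt_trans reach_u (rt_step _ _ _ _ uv).
have sep : ands_separated a (reach f) (l_ands (graph f)).
  by move=> p q pq j; apply: safe_f pq j (ltn_ord j).
have inputs : wires_carry (reach f) (iota 0 a) [tuple ('X_j : {mpoly F2[a]}) | j < a].
  by move=> j; rewrite tnth_mktuple nth_iota // add0n; apply/multilinear_atX/rt_refl.
have /(_ k) := wires_carry_build (size_iota 0 a) pres sep inputs.
by rewrite tnth_mktuple comp_mpoly_id => /(_ m m_supp i) [].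
Qed.
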